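(* Assume the setting below with general missingness: the $M_i(1),M_i(0)\in\{0,1\}$ are arbitrary constants whose values may depend on the potential outcomes in an arbitrary way. Fix $\boldsymbol\delta\in\mathbb R^n$ and a constant $b\in\mathbb R$, and define $\tilde{\boldsymbol Y}^{\texttt{g}}_{\boldsymbol Z,\boldsymbol\delta,b}(0)\in\overline{\mathbb R}^n$ by $$\tilde Y^{\texttt{g}}_{\boldsymbol Z,\boldsymbol\delta,b,i}(0)=\begin{cases}\min\{Y_i-\delta_i,b\},& Z_i=1,\ M_i=1,\\ -\infty,& Z_i=1,\ M_i=0,\\ Y_i,& Z_i=0,\ M_i=1,\\ b,& Z_i=0,\ M_i=0,\end{cases}\qquad 1\le i\le n.$$ Then $\tilde p^{\texttt{g}}_{\boldsymbol Z,\boldsymbol\delta,b}:=G_{\mathrm R,\phi}\big(t_{\mathrm R,\phi}(\boldsymbol Z,\tilde{\boldsymbol Y}^{\texttt{g}}_{\boldsymbol Z,\boldsymbol\delta,b}(0))\big)$ is a valid p-value for $H_{\boldsymbol\delta}:\boldsymbol\tau=\boldsymbol\delta$: if $H_{\boldsymbol\delta}$ holds then $\mathbb P(\tilde p^{\texttt{g}}_{\boldsymbol Z,\boldsymbol\delta,b}\le\alpha)\le\alpha$ for every $\alpha\in(0,1)$.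
   Context: There are $n$ units. Unit $i$ has fixed potential outcomes $Y_i^\star(0),Y_i^\star(1)\in\mathbb R$ and fixed potential missingness indicators $M_i(0),M_i(1)\in\{0,1\}$; $\tau_i=Y_i^\star(1)-Y_i^\star(0)$, $\boldsymbol\tau=(\tau_1,\dots,\tau_n)^\intercal$. The assignment $\boldsymbol Z\in\{0,1\}^n$ is drawn from a completely randomized experiment (CRE): for fixed positive integers $n_1,n_0$ with $n_1+n_0=n$, $\boldsymbol Z$ is uniform over vectors in $\{0,1\}^n$ with exactly $n_1$ ones, independently of all potential outcomes and missingness indicators; probabilities are over $\boldsymbol Z$. Observed missingness $M_i=Z_iM_i(1)+(1-Z_i)M_i(0)$; the realized outcome $Z_iY_i^\star(1)+(1-Z_i)Y_i^\star(0)$ is observed, and denoted $Y_i$, only when $M_i=1$. Test statistics: $\overline{\mathbb R}=\mathbb R\cup\{\pm\infty\}$; for $1\le i,j\le n$, $y,y'\in\overline{\mathbb R}$, $\psi_{i,j}(y,y')=\mathbf 1\{y>y'\}+\mathbf 1\{y=y'\}\mathbf 1\{i\ge j\}$; $\mathrm{rank}_i(\boldsymbol y)=\sum_{j=1}^n\psi_{i,j}(y_i,y_j)$. $\phi$ is a fixed nondecreasing real function on the nonnegative integers. $t_{\mathrm R,\phi}(\boldsymbol z,\boldsymbol y)$ is either $\sum_i z_i\phi(\mathrm{rank}_i(\boldsymbol y))$ (rank-sum) or $\sum_i z_i\phi\big(\sum_j(1-z_j)\psi_{i,j}(y_i,y_j)\big)$ (Mann–Whitney type); the result holds for either. $G_{\mathrm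 R,\phi}(c)=\mathbb P(t_{\mathrm R,\phi}(\boldsymbol A,\boldsymbol y_0)\ge c)$ with $\boldsymbol A$ from the CRE and $\boldsymbol y_0\in\mathbb R^n$ any fixed vector (independent of the choice of $\boldsymbol y_0$). *)

From HB Require Import structures.
From mathcomp Require Import all_boot all_order all_algebra.
From mathcomp Require Import reals constructive_ereal.
Set Implicit Arguments. Unset Strict Implicit. Unset Printing Implicit Defensive.
Import Order.TTheory GRing.Theory Num.Theory.
Local Open Scope ring_scope.

(* Assignments: z : {ffun 'I_n -> bool}; z i = true means Z_i = 1. *)
Definition assignment (n : nat) := {ffun 'I_n -> bool}.

(* Support of the completely randomized experiment with n1 treated units. *)
Definition cre (n n1 : nat) : {set assignment n} :=
  [set z : assignment n | #|[set i | z i]| == n1].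

Definition cre_prob (R : realType) (n n1 : nat) (E : pred (assignment n)) : R :=
  #|[set z in cre n n1 | E z]|%:R / #|cre n n1|%:R.

Definition psi (R : realType) (n : nat) (i j : 'I_n) (y y' : \bar R) : nat :=
  ((y' < y)%E : nat) + ((y == y') && (j <= i)%N : nat).

Definition rank (R : realType) (n : nat) (y : 'I_n -> \bar R) (i : 'I_n) : nat :=
  (\sum_(j < n) psi i j (y i) (y j))%N.

Inductive stat_kind := RankSum | MannWhitney.

Definition tstat (R : realType) (n : nat) (k : stat_kind) (phi : nat -> R)
    (z : assignment n) (y : 'I_n -> \bar R) : R :=
  \sum_(i < n | z i)
    phi (match k with
         | RankSum => rank y i
         | MannWhitney => (\sum_(j < n | ~~ z j) psi i j (y i) (y j))%N
         end).

Definition Gtail (R : realType) (n n1 : nat) (k : stat_kind) (phi : nat -> R)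
    (y0 : 'I_n -> R) (c : R) : R :=
  cre_prob R n1 (fun a => c <= tstat k phi a (fun i => (y0 i)%:E)).

Definition Ytilde (R : realType) (n : nat) (Y1 Y0 : 'I_n -> R) (M1 M0 : 'I_n -> bool)
    (delta : 'I_n -> R) (b : R) (z : assignment n) : 'I_n -> \bar R :=
  fun i =>
    let Mi := if z i then M1 i else M0 i in
    let Yi := if z i then Y1 i else Y0 i in
    if z i then (if Mi then (Num.min (Yi - delta i) b)%:E else -oo%E)
    else (if Mi then Yi%:E else b%:E).

From HB Require Import structures.
From mathcomp Require Import all_boot all_order fingroup perm all_algebra.
From mathcomp Require Import reals constructive_ereal.
From mathcomp Require Import zify.
Set Implicit Arguments. Unset Strict Implicit. Unset Printing Implicit Defensive.
Import Order.TTheory GRing.Theory Num.Theory.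
Local Open Scope ring_scope.

(* Under the null, a treated unit's imputed value is u_i := min(Y_i(0), b) if
   M_i(1) = 1 and -oo otherwise; the vector u does not depend on Z. A control
   unit's imputed value (Y_i(0) or b) is at least u_i. Raising control values
   can only lower the counts psi of treated units, so t(Z, Ytilde) <= t(Z, u),
   and since G is nonincreasing the p-value dominates G(t(Z, u)). Ranks with
   index tie-breaking form a permutation of 1..n, so t(., u) has the same
   distribution under the CRE as t(., y0); finally G(T) is a valid p-value when
   G is the tail function of T itself. *)

Lemma psiE (R : realType) n (i j : 'I_n) (a x : \bar R) :
  psi i j a x = ((x < a)%E || ((a == x) && (j <= i)%N)).
Proof. by rewrite /psi; case: (ltgtP x a). Qed.

Lemma psi_nonincreasing (R : realType) n (i j : 'I_n) (a x x' : \bar R) :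
  (x' <= x)%E -> (psi i j a x <= psi i j a x')%N.
Proof.
move=> le_x'x; rewrite !psiE.
case: orP => [[lt_xa|/andP[/eqP eq_ax le_ji]]|//].
  by rewrite (le_lt_trans le_x'x lt_xa).
move: le_x'x; rewrite -eq_ax le_eqVlt => /orP[/eqP->|->//].
by rewrite eqxx le_ji orbT.
Qed.

Section Ranks.
Variables (R : realType) (n : nat).
Implicit Types (y : 'I_n -> \bar R) (i j l : 'I_n).

Definition beats y i j : bool := (y j < y i)%E || ((y i == y j) && (j <= i)%N).

Lemma psi_beats y i j : psi i j (y i) (y j) = beats y i j.
Proof. exact: psiE. Qed.

Lemma beats_refl y i : beats y i i.
Proof. by rewrite /beats eqxx leqnn orbT. Qed.

Lemma beats_total y i j : i != j -> beats y i j = ~~ beats y j i.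
Proof.
rewrite /beats => neq_ij; case: (ltgtP (y j) (y i)) => //= _.
by move: neq_ij; rewrite -val_eqE /=; lia.
Qed.

Lemma beats_trans y i j l : beats y i j -> beats y j l -> beats y i l.
Proof.
rewrite /beats => /orP[lt_ji|/andP[/eqP eq_ij le_ji]]
                  /orP[lt_lj|/andP[/eqP eq_jl le_lj]].
- by rewrite (lt_trans lt_lj lt_ji).
- by rewrite -eq_jl lt_ji.
- by rewrite eq_ij lt_lj.
- by rewrite eq_ij eq_jl eqxx (leq_trans le_lj le_ji) orbT.
Qed.

Lemma rankE y i : rank y i = #|[set j | beats y i j]|.
Proof.
rewrite /rank -sum1_card [RHS]big_mkcond /=; apply: eq_bigr => j _.
by rewrite psi_beats inE; case: (beats y i j).
Qed.

Lemma rank_gt0 y i : (0 < rank y i)%N.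
Proof. by rewrite rankE; apply/card_gt0P; exists i; rewrite inE beats_refl. Qed.

Lemma rank_le y i : (rank y i <= n)%N.
Proof. by rewrite rankE; apply: leq_trans (max_card _) _; rewrite card_ord. Qed.

Lemma ltn_rank y i j : beats y i j -> i != j -> (rank y j < rank y i)%N.
Proof.
move=> bij neq_ij; rewrite !rankE; apply/proper_card/properP; split.
  by apply/subsetP => l; rewrite !inE; apply: beats_trans.
by exists i; rewrite !inE ?beats_refl // beats_total 1?eq_sym // bij.
Qed.

Lemma beats_rank y i j : beats y i j = (rank y j <= rank y i)%N.
Proof.
have [->|neq_ij] := eqVneq i j; first by rewrite beats_refl leqnn.
case bij: (beats y i j); first by rewrite ltnW // ltn_rank.
have bji : beats y j i by rewrite beats_total 1?eq_sym // bij.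
by apply/esym/negbTE; rewrite -ltnNge ltn_rank // eq_sym.
Qed.

Lemma rank_pred_lt y i : ((rank y i).-1 < n)%N.
Proof. by apply: leq_trans (rank_le y i); rewrite ltn_predL rank_gt0. Qed.

Definition rank_ord y i : 'I_n := Ordinal (rank_pred_lt y i).

Lemma beats_rank_ord y i j : beats y i j = (rank_ord y j <= rank_ord y i)%N.
Proof.
by rewrite beats_rank /=; have := rank_gt0 y i; have := rank_gt0 y j; lia.
Qed.

Lemma rank_ord_inj y : injective (rank_ord y).
Proof.
move=> i j eq_rk; apply/eqP/negPn/negP => /(beats_total y).
by rewrite !beats_rank_ord eq_rk leqnn.
Qed.

Definition rank_perm y : {perm 'I_n} := perm (@rank_ord_inj y).

End Ranks.

Section DistributionFree.
Variables (R : realType) (n : nat) (k : stat_kind) (phi : nat -> R).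
Implicit Types (y : 'I_n -> \bar R) (z : assignment n).

(* [tstat] for data whose rank vector is (1, ..., n). *)
Definition sorted_tstat z : R :=
  \sum_(i < n | z i) phi (match k with
     | RankSum => i.+1
     | MannWhitney => (\sum_(j < n | ~~ z j) ((j <= i)%N : nat))%N
     end).

Definition sort_assignment y z : assignment n := [ffun i => z ((rank_perm y)^-1%g i)].

Lemma rank_ord_permV y i : rank_ord y ((rank_perm y)^-1%g i) = i.
Proof.
have rank_permE x : rank_perm y x = rank_ord y x by rewrite permE.
by rewrite -rank_permE permKV.
Qed.

Lemma tstat_sorted y z : tstat k phi z y = sorted_tstat (sort_assignment y z).
Proof.
rewrite /tstat /sorted_tstat (reindex_inj (@perm_inj _ (rank_perm y)^-1%g)).
apply: eq_big => [i|i _]; first by rewrite ffunE.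
congr phi; case: k.
  by rewrite -[in RHS](rank_ord_permV y i) /= prednK ?rank_gt0.
rewrite (reindex_inj (@perm_inj _ (rank_perm y)^-1%g)).
apply: eq_big => [j|j _]; first by rewrite ffunE.
by rewrite psi_beats beats_rank_ord !rank_ord_permV.
Qed.

Lemma sort_assignment_inj y : injective (sort_assignment y).
Proof.
move=> z1 z2 eq_z; apply/ffunP => i.
by have := congr1 (fun z => z (rank_perm y i)) eq_z; rewrite !ffunE permK.
Qed.

Lemma sort_assignment_cre y n1 z :
  (sort_assignment y z \in cre n n1) = (z \in cre n n1).
Proof.
rewrite !inE.
have -> : [set i | sort_assignment y z i] = (rank_perm y)^-1%g @^-1: [set i | z i].
  by apply/setP => i; rewrite !inE ffunE.
by rewrite card_preimset //; apply: perm_inj.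
Qed.

Lemma card_tstat_ge y n1 (c : R) :
  #|[set z in cre n n1 | c <= tstat k phi z y]| =
  #|[set z in cre n n1 | c <= sorted_tstat z]|.
Proof.
rewrite -[RHS](card_preimset _ (@sort_assignment_inj y)); apply: eq_card => z.
by have := sort_assignment_cre y n1 z; rewrite !inE tstat_sorted => ->.
Qed.

Lemma cre_prob_tstat_ge_invariant y y' n1 (c : R) :
  cre_prob R n1 (fun z => c <= tstat k phi z y) =
  cre_prob R n1 (fun z => c <= tstat k phi z y').
Proof. by rewrite /cre_prob !card_tstat_ge. Qed.

End DistributionFree.

Lemma le_cre_prob (R : realType) n n1 (E E' : pred (assignment n)) :
  (forall z, z \in cre n n1 -> E z -> E' z) ->
  cre_prob R n1 E <= cre_prob R n1 E'.
Proof.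
move=> sub_EE'; rewrite /cre_prob ler_wpM2r ?invr_ge0 ?ler0n // ler_nat.
apply/subset_leq_card/subsetP => z; move: (sub_EE' z); rewrite !inE.
by move=> sub_z /andP[z_cre Ez]; rewrite z_cre sub_z.
Qed.

Lemma cre_prob_tail_le (R : realType) n n1 (T : assignment n -> R) (alpha : R) :
  0 <= alpha ->
  cre_prob R n1 (fun z => cre_prob R n1 (fun a => T z <= T a) <= alpha) <= alpha.
Proof.
move=> alpha_ge0.
pose small z := (z \in cre n n1) && (cre_prob R n1 (fun a => T z <= T a) <= alpha).
have [z0 small_z0|no_small] := pickP small.
  (* For a minimiser zm of T on the event, the event lies in {a | T zm <= T a},
     whose probability is at most alpha since zm is in the event. *)
  have [zm /andP[_ small_zm] min_zm] := arg_minP T small_z0.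
  apply: le_trans small_zm; apply: le_cre_prob => z z_cre small_z.
  by apply: min_zm; rewrite /small z_cre.
rewrite /cre_prob; set E := [set z in cre n n1 | _].
suff -> : E = set0 by rewrite cards0 mul0r.
apply/setP => z; rewrite [RHS]inE in_set.
by have := no_small z; rewrite /small => ->.
Qed.

Lemma tstat_le_lower_controls (R : realType) n (k : stat_kind) (phi : nat -> R)
    (z : assignment n) (y u : 'I_n -> \bar R) :
  {homo phi : a c / (a <= c)%N >-> a <= c} ->
  (forall i, z i -> y i = u i) -> (forall j, (u j <= y j)%E) ->
  tstat k phi z y <= tstat k phi z u.
Proof.
move=> phi_homo eq_treated le_uy; apply: ler_sum => i zi; apply: phi_homo.
by case: k; rewrite ?/rank; apply: leq_sum => j _;
  rewrite eq_treated ?psi_nonincreasing.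
Qed.

Theorem theorem2 (R : realType) (n n1 n0 : nat)
    (hn1 : (0 < n1)%N) (hn0 : (0 < n0)%N) (hn : (n1 + n0)%N = n)
    (k : stat_kind) (phi : nat -> R)
    (hphi : forall a c : nat, (a <= c)%N -> phi a <= phi c)
    (y0 : 'I_n -> R)
    (Y1 Y0 : 'I_n -> R) (M1 M0 : 'I_n -> bool)
    (delta : 'I_n -> R) (b : R)
    (Hnull : forall i : 'I_n, Y1 i - Y0 i = delta i)
    (alpha : R) (halpha0 : 0 < alpha) (halpha1 : alpha < 1) :
  cre_prob R n1 (fun z : assignment n =>
    Gtail n1 k phi y0 (tstat k phi z (Ytilde Y1 Y0 M1 M0 delta b z)) <= alpha)
  <= alpha.
Proof.
pose u i := if M1 i then (Num.min (Y0 i) b)%:E else -oo%E.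
have Y1_sub_delta i : Y1 i - delta i = Y0 i by rewrite -Hnull opprB addrC subrK.
have treated_u (z : assignment n) i : z i -> Ytilde Y1 Y0 M1 M0 delta b z i = u i.
  by move=> zi; rewrite /Ytilde /u zi Y1_sub_delta.
have u_le (z : assignment n) j : (u j <= Ytilde Y1 Y0 M1 M0 delta b z j)%E.
  rewrite /Ytilde /u; case: (z j); rewrite ?Y1_sub_delta;
    by case: (M1 j); case: (M0 j); rewrite ?lexx ?lee_fin ?ge_min ?lexx ?orbT ?leNye.
apply: le_trans (cre_prob_tail_le n1 (tstat k phi ^~ u) (ltW halpha0)).
apply: le_cre_prob => z _; apply: le_trans.
rewrite /Gtail (cre_prob_tstat_ge_invariant _ _ (fun i => (y0 i)%:E) u).
apply: le_cre_prob => a _; apply: le_trans.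
exact: tstat_le_lower_controls hphi (treated_u z) (u_le z).
Qed.
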